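(* In the binary-input random coding setting described in the context, with message $1$ transmitted, for any $w'\neq1$ and any $\theta<0$, almost surely $$\lim_{N\to\infty}\frac1N\ln\mathbb E\big\{e^{N\theta\mathsf D(w')}\,\big|\,\underline{\mathsf T}\big\}=\mathbb E\Big[\ln\big(1+e^{\theta|\ln(q^+(\mathsf Y)/q^-(\mathsf Y))|}\big)\Big]-\ln2,$$ where on the right $\mathsf Y$ has density $(q^++q^-)/2$.
   Context: Let $q^+$ and $q^-$ be probability density functions on $\mathbb R$. They are the output densities of a binary-input memoryless channel when the input is $+1$ and $-1$, respectively. Assume: (A1) There exist $M_1>0$, $a>0$ and a polynomial $S_1$ with $q^\pm(y)<S_1(|y|)e^{-a|y|}$ for all $|y|>M_1$. (A2) There exist $M_2>0$ and a polynomial $S_2$ with $|\ln(q^+(y)/q^-(y))|<S_2(|y|)$ for all $|y|>M_2$. (A3) Let $\mathsf X$ be uniform on $\{+1,-1\}$, let $\mathsf Y$ have density $q^{+}$ given $\mathsf X=+1$ and $q^-$ given $\mathsf X=-1$, and let $\mathsf T=\ln(q^+(\mathsf Y)/q^-(\mathsf Y))$. The CDF $\Psi$ of $|\mathsf T|$ on $[0,\infty)$ and its inverse $\Psi^{-1}$ are smooth with finite first, second and third derivatives. Random coding: the codebook has $\lceil e^{NR}\rceil$ codewords $\underline{\mathsf X}(w)=(\mathsf X_1(w),\dots,\mathsf X_N(w))$, with all entries i.i.d. uniform on $\{\pm1\}$. Message $1$ is transmitted: given $\underline{\mathsf X}(1)$, the outputs $\mathsf Y_1,\dots,\mathsf Y_N$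 are independent, with $\mathsf Y_i$ having density $q^{\mathsf X_i(1)}$. Let $\mathsf T_i=\ln(q^+(\mathsf Y_i)/q^-(\mathsf Y_i))$ and $\underline{\mathsf T}=(\mathsf T_1,\dots,\mathsf T_N)$. Let $\mathsf R_i$ be the rank of $|\mathsf T_i|$ among $|\mathsf T_1|,\dots,|\mathsf T_N|$ (rank $1$ is the smallest). Let $\mathrm{sgn}(t)=1$ if $t\ge0$ and $-1$ otherwise. The CDF-ORBGRAND metric is $$\mathsf D(w)=\frac1N\sum_{i=1}^N\Psi^{-1}\Big(\frac{\mathsf R_i}{N+1}\Big)\mathbf 1\big(\mathrm{sgn}(\mathsf T_i)\mathsf X_i(w)<0\big).$$ *)

From HB Require Import structures.
From mathcomp Require Import all_boot all_order all_algebra.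
From mathcomp Require Import all_classical all_reals all_analysis.
Set Implicit Arguments. Unset Strict Implicit. Unset Printing Implicit Defensive.
Import Order.TTheory GRing.Theory Num.Theory.
Import numFieldNormedType.Exports.
Local Open Scope classical_set_scope.
Local Open Scope ring_scope.

Section Defs.
Variable R : realType.

Definition sval (b : bool) : R := if b then 1 else -1.

Definition qof (qp qm : R -> R) (b : bool) : R -> R := if b then qp else qm.

Definition llr (qp qm : R -> R) (y : R) : R := ln (qp y / qm y).

Definition sgn (t : R) : R := if 0 <= t then 1 else -1.

Definition is_pdf (q : R -> R) : Prop :=
  measurable_fun setT q /\ (forall y, 0 <= q y) /\
  (\int[lebesgue_measure]_(y in setT) (q y)%:E = 1)%E.

(* CDF of |T| with (X,Y) as in (A3): Y has density (q^+ + q^-)/2. *)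
Definition PsiCDF (qp qm : R -> R) (t : R) : R :=
  fine (\int[lebesgue_measure]_(y in [set y | (`|llr qp qm y| <= t)%R])
          ((qp y + qm y) / 2)%R%:E)%E.

(* rank of |T_i| among |T_1|,...,|T_N| (1 = smallest); ties broken by index *)
Definition rank (N : nat) (t : 'I_N -> R) (i : 'I_N) : nat :=
  #|[set j : 'I_N | (`|t j| < `|t i|) || ((`|t j| == `|t i|) && (j <= i)%N)]|.

Definition Dmetric (Psiinv : R -> R) (N : nat) (t : 'I_N -> R)
    (x : {ffun 'I_N -> bool}) : R :=
  N%:R^-1 * \sum_(i < N)
     Psiinv ((rank t i)%:R / (N.+1)%:R) * (if sgn (t i) * sval (x i) < 0 then 1 else 0).

(* E{ e^{N theta D(w')} | T = t }: the codeword X(w'), w' <> 1, is uniform on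
   {+-1}^N and independent of T, so the conditional expectation is the average
   over all 2^N codewords. *)
Definition condMGF (Psiinv : R -> R) (theta : R) (N : nat) (t : 'I_N -> R) : R :=
  (2 ^+ N)^-1 * \sum_(x : {ffun 'I_N -> bool}) expR (N%:R * theta * Dmetric Psiinv t x).

End Defs.

(** Given T, each entry of the codeword X(w') is a fair sign, independent of the
    others, that disagrees with sgn(T_i) with probability 1/2.  Hence the
    conditional moment generating function factorizes,
      E{e^{N theta D(w')} | T} = prod_i (1 + e^{theta Psi^-1(R_i/(N+1))}) / 2,
    and since the ranks R_i permute 1..N, its normalized logarithm is
    S_N/N - ln 2 with S_N = sum_{k=1}^N g(Psi^-1(k/(N+1))) and
    g(s) = ln(1 + e^{theta s}): a deterministic Riemann sum.
    The quantiles t_k = Psi^-1(k/(N+1)) cut [0, oo) into bands of probability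
    1/(N+1) for |T|, on which the nonincreasing g lies between g(t_{k+1}) and
    g(t_k); integrating the corresponding step functions gives
      S_N/(N+1) <= E g(|T|) <= (ln 2 + S_N)/(N+1),
    so S_N/N -> E g(|T|).  The convergence thus holds for every sample path. *)

From Pilot Require Import Defs.
From mathcomp Require Import all_boot all_order all_algebra.
From mathcomp Require Import all_classical all_reals all_analysis.
From mathcomp Require Import measurable_realfun.
From mathcomp Require Import ring lra.
Import Order.TTheory GRing.Theory Num.Theory.
Import numFieldNormedType.Exports.
Set Implicit Arguments. Unset Strict Implicit.
Local Open Scope classical_set_scope.
Local Open Scope ring_scope.

Section Softplus.
Variable R : realType.

Definition softplus (x : R) := ln (1 + expR x).

Lemma add1expR_gt0 (x : R) : 0 < 1 + expR x.
Proof. by rewrite addr_gt0 ?expR_gt0. Qed.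

Lemma softplus_ge0 (x : R) : 0 <= softplus x.
Proof. by rewrite ln_ge0 // lerDl expR_ge0. Qed.

Lemma ler_softplus : {homo softplus : x y / x <= y}.
Proof. by move=> x y xy; rewrite ler_ln ?posrE ?add1expR_gt0 // lerD2l ler_expR. Qed.

Lemma measurable_softplus : measurable_fun setT softplus.
Proof.
apply: measurableT_comp; first exact: measurable_ln.
by apply: measurable_funD => //; exact: measurable_expR.
Qed.

Lemma softplus0 : softplus 0 = ln 2.
Proof. by rewrite /softplus expR0. Qed.

End Softplus.

Section ConditionalMGF.
Variable R : realType.

Lemma ln_prod (I : Type) (r : seq I) (F : I -> R) :
  (forall i, 0 < F i) -> ln (\prod_(i <- r) F i) = \sum_(i <- r) ln (F i).
Proof.
move=> F_gt0; elim: r => [|i r IH]; first by rewrite !big_nil ln1.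
by rewrite !big_cons lnM ?IH // posrE // prodr_gt0.
Qed.

Lemma sum_sign_mismatch (F : bool -> R) (t : R) :
  \sum_(b : bool) F (sgn t * Defs.sval R b < 0) = F true + F false.
Proof.
rewrite big_bool /sgn /Defs.sval.
case: ifP => _; rewrite ?mulr1 ?mulrN1 ?mul1r ?mulN1r ?opprK.
  by rewrite ltr10 ltrN10 addrC.
by rewrite ltrN10 ltr10.
Qed.

Lemma scaled_Dmetric (Psiinv : R -> R) (N : nat) (t : 'I_N -> R) x :
  N%:R * Dmetric Psiinv t x =
  \sum_(i < N) Psiinv ((rank t i)%:R / N.+1%:R) *
                 (if sgn (t i) * Defs.sval R (x i) < 0 then 1 else 0).
Proof.
rewrite /Dmetric mulrA; case: N t x => [|n] t x; first by rewrite !big_ord0 mulr0.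
by rewrite mulfV ?mul1r // pnatr_eq0.
Qed.

Lemma condMGF_prod (Psiinv : R -> R) (theta : R) (N : nat) (t : 'I_N -> R) :
  condMGF Psiinv theta t =
  \prod_(i < N) ((1 + expR (theta * Psiinv ((rank t i)%:R / N.+1%:R))) / 2).
Proof.
pose w (i : 'I_N) := Psiinv ((rank t i)%:R / N.+1%:R).
pose F i (c : bool) := expR (theta * (w i * (if c then 1 else 0))).
have expD x : expR (N%:R * theta * Dmetric Psiinv t x) =
    \prod_(i < N) F i (sgn (t i) * Defs.sval R (x i) < 0).
  by rewrite [_ * theta]mulrC -mulrA scaled_Dmetric mulr_sumr expR_sum.
rewrite /condMGF (eq_bigr _ (fun x _ => expD x)).
rewrite -(bigA_distr_bigA (fun i b => F i (sgn (t i) * Defs.sval R b < 0))) /=.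
rewrite -exprVn -[X in _ ^+ X]card_ord -prodr_const -big_split /=.
apply: eq_bigr => i _; rewrite sum_sign_mismatch /F.
by rewrite mulr1 !mulr0 expR0 addrC mulrC.
Qed.

Lemma ln_condMGF (Psiinv : R -> R) (theta : R) (N : nat) (t : 'I_N -> R) :
  (0 < N)%N ->
  N%:R^-1 * ln (condMGF Psiinv theta t) =
  N%:R^-1 * \sum_(i < N) softplus (theta * Psiinv ((rank t i)%:R / N.+1%:R)) - ln 2.
Proof.
move=> N_gt0; rewrite condMGF_prod ln_prod; last first.
  by move=> i; rewrite divr_gt0 ?add1expR_gt0.
under eq_bigr => i _ do rewrite lnM ?posrE ?add1expR_gt0 ?invr_gt0 // lnV ?posrE //.
rewrite sumrB sumr_const card_ord mulrBr -[ln 2 *+ N]mulr_natr mulrCA mulVf ?mulr1 //.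
by rewrite pnatr_eq0 -lt0n.
Qed.

End ConditionalMGF.

Lemma card_le_key_inj d (T : finType) (U : orderType d) (key : T -> U) :
  injective key -> injective (fun i => #|[pred j | (key j <= key i)%O]|).
Proof.
move=> key_inj i j; wlog kij : i j / (key i <= key j)%O.
  move=> wlog_ij e; case/orP: (le_total (key i) (key j)) => k; first exact: wlog_ij.
  by symmetry; apply: wlog_ij.
move=> e; have sub : [pred k | (key k <= key i)%O] \subset [pred k | (key k <= key j)%O].
  by apply/fintype.subsetP => k; rewrite !inE => /le_trans; apply.
have /(_ j) := subset_cardP e sub; rewrite !inE lexx => kji.
by apply: key_inj; apply/le_anti; rewrite kij kji.
Qed.

Section Rank.
Variables (R : realType) (N : nat) (t : 'I_N -> R).

Definition rank_key (i : 'I_N) : R *l nat := (`|t i|, val i).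

Lemma rank_keyE i : rank t i = #|[pred j | (rank_key j <= rank_key i)%O]|.
Proof.
apply: eq_card => j; rewrite !inE lexi_pair /=.
by apply/idP/idP; rewrite in_setE /=; case: ltgtP.
Qed.

Lemma rank_inj : injective (rank t).
Proof.
by move=> i j; rewrite !rank_keyE; apply: card_le_key_inj => a b [_ /val_inj].
Qed.

Lemma rank_gt0 i : (0 < rank t i)%N.
Proof. by rewrite rank_keyE; apply/card_gt0P; exists i; rewrite inE. Qed.

Lemma rank_le i : (rank t i <= N)%N.
Proof. by rewrite -[leqRHS]card_ord max_card. Qed.

Lemma sum_rank (F : nat -> R) : \sum_(i < N) F (rank t i) = \sum_(k < N) F k.+1.
Proof.
have rank_pred_lt i : ((rank t i).-1 < N)%N by rewrite prednK ?rank_gt0 ?rank_le.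
have sigma_inj : injective (fun i => Ordinal (rank_pred_lt i)).
  by move=> i j [] /(congr1 S); rewrite !prednK ?rank_gt0 //; apply: rank_inj.
rewrite [RHS](reindex_inj sigma_inj); apply: eq_bigr => i _ /=.
by rewrite prednK ?rank_gt0.
Qed.
End Rank.

Section BoundedMeasurable.
Variable R : realType.

Lemma measurable_inv : measurable_fun setT (@GRing.inv R).
Proof.
rewrite -(setUv [set 0]); apply/measurable_funU => //; first exact: measurableC.
split.
  have inv0 : {in [set 0], (fun=> 0) =1 @GRing.inv R}.
    by move=> x; rewrite inE /= => ->; rewrite invr0.
  by apply: eq_measurable_fun inv0 _; exact: measurable_cst.
apply: open_continuous_measurable_fun; first by rewrite openC; exact: closed_eq.
by move=> x; rewrite inE /= => /eqP x0; exact: inv_continuous.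
Qed.

Definition bdd_measurable (phi : R -> R) :=
  measurable_fun setT phi /\ exists C, forall s, 0 <= s -> `|phi s| <= C.

Lemma bdd_measurable_cst c : bdd_measurable (fun=> c).
Proof. by split; [exact: measurable_cst | exists `|c|]. Qed.

Lemma bdd_measurable_ind_le c : bdd_measurable (fun s => if s <= c then 1 else 0).
Proof.
split; last by exists 1 => s _; case: ifP; rewrite ?normr1 ?normr0.
apply: measurable_fun_ifT; [|exact: measurable_cst..].
by apply: measurable_fun_ler => //; exact: measurable_cst.
Qed.

Lemma bdd_measurableD a b : bdd_measurable a -> bdd_measurable b ->
  bdd_measurable (fun s => a s + b s).
Proof.
move=> [ma [Ca Ha]] [mb [Cb Hb]]; split; first exact: measurable_funD.
by exists (Ca + Cb) => s s0; rewrite (le_trans (ler_normD _ _)) ?lerD ?Ha ?Hb.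
Qed.

Lemma bdd_measurableZ c a : bdd_measurable a -> bdd_measurable (fun s => c * a s).
Proof.
move=> [ma [Ca Ha]]; split; first exact: measurable_funM.
by exists (`|c| * Ca) => s s0; rewrite normrM ler_wpM2l ?Ha.
Qed.

Lemma bdd_measurableB a b : bdd_measurable a -> bdd_measurable b ->
  bdd_measurable (fun s => a s - b s).
Proof.
move=> ma mb; have := bdd_measurableD ma (bdd_measurableZ (-1) mb).
by congr bdd_measurable; apply: funext => s; rewrite mulN1r.
Qed.

Lemma bdd_measurable_sum (I : Type) (r : seq I) (F : I -> R -> R) :
  (forall i, bdd_measurable (F i)) -> bdd_measurable (fun s => \sum_(i <- r) F i s).
Proof.
move=> mF; elim: r => [|i r IH].
  by under eq_fun do rewrite big_nil; exact: bdd_measurable_cst.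
by under eq_fun do rewrite big_cons; exact: bdd_measurableD.
Qed.

End BoundedMeasurable.

#[local] Hint Resolve bdd_measurable_cst bdd_measurable_ind_le : core.

Section AbsLLRExpectation.
Variables (R : realType) (qp qm : R -> R).
Hypotheses (qp_pdf : is_pdf qp) (qm_pdf : is_pdf qm).

Definition qmix (y : R) := (qp y + qm y) / 2.

Definition E_absllr (phi : R -> R) :=
  \int[lebesgue_measure]_(y in setT) (phi `|llr qp qm y| * qmix y).

Lemma pdf_integrable (q : R -> R) :
  is_pdf q -> (@lebesgue_measure R).-integrable setT (EFin \o q).
Proof.
case=> mq [q0 q1]; apply/integrableP; split; first exact/measurable_EFinP.
under eq_fun do rewrite /= ger0_norm //.
by rewrite q1 ltry.
Qed.

Lemma qmix_ge0 y : 0 <= qmix y.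
Proof.
have [_ [qp_ge0 _]] := qp_pdf; have [_ [qm_ge0 _]] := qm_pdf.
by rewrite divr_ge0 ?addr_ge0.
Qed.

Lemma qmix_integrable : (@lebesgue_measure R).-integrable setT (EFin \o qmix).
Proof.
have := integrableZl measurableT (2^-1)
  (integrableD measurableT (pdf_integrable qp_pdf) (pdf_integrable qm_pdf)).
by apply: eq_integrable => // y _ /=; rewrite /qmix mulrC EFinM.
Qed.

Lemma measurable_absllr : measurable_fun setT (fun y => `|llr qp qm y|).
Proof.
case: qp_pdf => mp _; case: qm_pdf => mm _.
apply: measurableT_comp => //; apply: measurableT_comp; first exact: measurable_ln.
by apply: measurable_funM => //; apply: measurableT_comp => //; exact: measurable_inv.
Qed.

Lemma integrable_absllr phi : bdd_measurable phi ->
  (@lebesgue_measure R).-integrable setT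
    (EFin \o (fun y => phi `|llr qp qm y| * qmix y)).
Proof.
case=> mphi [C phiC].
have phiT_bdd : [bounded phi `|llr qp qm y| | y in setT].
  exists C; split; first by rewrite num_real.
  by move=> M CM y _; exact: le_trans (phiC _ (normr_ge0 _)) (ltW CM).
have := integrableMl measurableT qmix_integrable
  (measurableT_comp mphi measurable_absllr) phiT_bdd.
by apply: eq_integrable => // y _ /=; rewrite mulrC EFinM.
Qed.

Lemma E_absllrD a b : bdd_measurable a -> bdd_measurable b ->
  E_absllr (fun s => a s + b s) = E_absllr a + E_absllr b.
Proof.
move=> ma mb; rewrite /E_absllr -RintegralD ?integrable_absllr //.
by apply: eq_Rintegral => y _; rewrite mulrDl.
Qed.

Lemma E_absllrB a b : bdd_measurable a -> bdd_measurable b ->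
  E_absllr (fun s => a s - b s) = E_absllr a - E_absllr b.
Proof.
move=> ma mb; rewrite /E_absllr -RintegralB ?integrable_absllr //.
by apply: eq_Rintegral => y _; rewrite mulrBl.
Qed.

Lemma E_absllrZ c a : bdd_measurable a ->
  E_absllr (fun s => c * a s) = c * E_absllr a.
Proof.
move=> ma; rewrite /E_absllr -RintegralZl ?integrable_absllr //.
by apply: eq_Rintegral => y _; rewrite mulrA.
Qed.

Lemma pdf_Rintegral (q : R -> R) : is_pdf q -> \int[lebesgue_measure]_(y in setT) q y = 1.
Proof. by case=> _ [_ q1]; rewrite /Rintegral q1. Qed.

Lemma E_absllr_cst c : E_absllr (fun=> c) = c.
Proof.
have -> : E_absllr (fun=> c) =
    c / 2 * \int[lebesgue_measure]_(y in setT) (qp y + qm y).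
  rewrite -RintegralZl //; last exact: integrableD (pdf_integrable _) (pdf_integrable _).
  by apply: eq_Rintegral => y _; rewrite /qmix mulrA mulrAC.
rewrite RintegralD ?pdf_integrable // !pdf_Rintegral //.
by rewrite -mulrA mulVf ?mulr1 ?pnatr_eq0.
Qed.

Lemma E_absllr_sum (I : Type) (r : seq I) (F : I -> R -> R) :
  (forall i, bdd_measurable (F i)) ->
  E_absllr (fun s => \sum_(i <- r) F i s) = \sum_(i <- r) E_absllr (F i).
Proof.
move=> mF; elim: r => [|i r IH].
  rewrite big_nil -[RHS](E_absllr_cst 0).
  by congr E_absllr; apply: funext => s; rewrite big_nil.
rewrite big_cons -IH -E_absllrD //; last exact: bdd_measurable_sum.
by congr E_absllr; apply: funext => s; rewrite big_cons.
Qed.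

Lemma E_absllr_le a b : bdd_measurable a -> bdd_measurable b ->
  (forall s, 0 <= s -> a s <= b s) -> E_absllr a <= E_absllr b.
Proof.
move=> ma mb ab; apply: le_Rintegral; rewrite ?integrable_absllr //.
by move=> y _; rewrite ler_wpM2r ?qmix_ge0 ?ab.
Qed.

Lemma E_absllr_ind_le c : E_absllr (fun s => if s <= c then 1 else 0) = PsiCDF qp qm c.
Proof.
change (PsiCDF qp qm c) with
  (\int[lebesgue_measure]_(y in [set y | `|llr qp qm y| <= c]) qmix y).
rewrite Rintegral_mkcond; apply: eq_Rintegral => y _; rewrite patchE.
by case: ifPn => yc; [rewrite mem_set ?mul1r | rewrite memNset ?mul0r //=; exact/negP].
Qed.

Lemma PsiCDF_le s u : s <= u -> PsiCDF qp qm s <= PsiCDF qp qm u.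
Proof.
move=> su; rewrite -!E_absllr_ind_le.
apply: E_absllr_le; [exact: bdd_measurable_ind_le.. | move=> x _].
by case: ifP => [xs|_]; [rewrite (le_trans xs su) | case: ifP].
Qed.

End AbsLLRExpectation.

Section QuantileSteps.
Variables (R : realType) (N : nat) (t : nat -> R).
Hypothesis t_mono : forall k, (k < N)%N -> t k <= t k.+1.

Definition below k (s : R) : R := if s <= t k then 1 else 0.

Definition band k s := below k.+1 s - below k s.

Lemma bandE k s : (k < N)%N -> band k s = if t k < s <= t k.+1 then 1 else 0.
Proof.
move=> kN; rewrite /band /below ltNge; case: (leP s (t k)) => sk /=.
  by rewrite (le_trans sk (t_mono kN)) subrr.
by case: ifP; rewrite ?subr0 ?subrr.
Qed.

Lemma ler_band_weight k s a b : (k < N)%N ->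
  (t k < s <= t k.+1 -> a <= b) -> a * band k s <= b * band k s.
Proof. by move=> kN ab; rewrite bandE //; case: ifP => [/ab|]; rewrite ?mulr1 ?mulr0. Qed.

Lemma sum_band s : \sum_(k < N) band k s = below N s - below 0 s.
Proof. by rewrite -(big_mkord xpredT (band ^~ s)) telescope_sumr. Qed.

Variables (g : R -> R) (M : R).
Hypothesis g_anti : forall x y, x <= y -> g y <= g x.
Hypothesis g_ge0 : forall s, 0 <= g s.
Hypothesis g_le : forall s, 0 <= s -> g s <= M.

Definition lower_step s := \sum_(k < N) g (t k.+1) * band k s.

(* The term [M * below 0] only sees s <= t 0, a range of probability
   Psi (t 0) = 0 in [E_absllr_upper_step]. *)
Definition upper_step s :=
  M * below 0 s + \sum_(k < N) g (t k) * band k s + g (t N) * (1 - below N s).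

Lemma lower_step_le s : lower_step s <= g s.
Proof.
apply: (@le_trans _ _ (\sum_(k < N) g s * band k s)).
  by apply: ler_sum => k _; apply: ler_band_weight => // /andP[_]; exact: g_anti.
rewrite -mulr_sumr sum_band ler_piMr // /below.
by case: ifP; case: ifP; rewrite ?subrr ?subr0 ?sub0r ?lerN10 ?ler01.
Qed.

Lemma upper_step_ge s : 0 <= s -> g s <= upper_step s.
Proof.
move=> s0; have -> : g s = g s * below 0 s + \sum_(k < N) g s * band k s
                          + g s * (1 - below N s).
  by rewrite -mulr_sumr sum_band; ring.
rewrite /upper_step; apply: lerD; first apply: lerD.
- by rewrite ler_wpM2r ?g_le // /below; case: ifP.
- by apply: ler_sum => k _; apply: ler_band_weight => // /andP[/ltW tks _]; exact: g_anti.
- rewrite /below; case: (leP s (t N)) => [_|/ltW sN]; first by rewrite subrr !mulr0.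
  by rewrite subr0 !mulr1 g_anti.
Qed.

End QuantileSteps.

Lemma bdd_measurable_below (R : realType) (t : nat -> R) k : bdd_measurable (below t k).
Proof. exact: bdd_measurable_ind_le. Qed.

Lemma bdd_measurable_band (R : realType) (t : nat -> R) k : bdd_measurable (band t k).
Proof. exact: bdd_measurableB (bdd_measurable_below _ _) (bdd_measurable_below _ _). Qed.

Lemma bdd_measurable_band_step (R : realType) (N : nat) (t a : nat -> R) :
  bdd_measurable (fun s => \sum_(k < N) a k * band t k s).
Proof. by apply: bdd_measurable_sum => k; exact/bdd_measurableZ/bdd_measurable_band. Qed.

#[local] Hint Resolve bdd_measurable_below bdd_measurable_band : core.

Lemma bdd_measurable_upper_step (R : realType) (N : nat) (t : nat -> R) g M :
  bdd_measurable (upper_step N t g M).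
Proof.
apply: bdd_measurableD; first apply: bdd_measurableD.
- exact: bdd_measurableZ.
- exact: (bdd_measurable_band_step N t (g \o t)).
- by apply: bdd_measurableZ; exact: bdd_measurableB.
Qed.

Section QuantileSandwich.
Variables (R : realType) (qp qm : R -> R).
Hypotheses (qp_pdf : is_pdf qp) (qm_pdf : is_pdf qm).
Variables (N : nat) (t : nat -> R).
Hypothesis t0_ge0 : 0 <= t 0.
Hypothesis Psi_t : forall k, (k <= N)%N -> PsiCDF qp qm (t k) = k%:R / N.+1%:R.

Lemma quantile_mono k : (k < N)%N -> t k <= t k.+1.
Proof.
move=> kN; rewrite leNgt; apply/negP => /ltW/(PsiCDF_le qp_pdf qm_pdf).
by rewrite !Psi_t ?(ltnW kN) // ler_pM2r ?invr_gt0 ?ltr0Sn // ler_nat ltnn.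
Qed.

Lemma E_absllr_below k : (k <= N)%N -> E_absllr qp qm (below t k) = k%:R / N.+1%:R.
Proof. by move=> kN; rewrite E_absllr_ind_le // Psi_t. Qed.

Lemma E_absllr_band_step (a : nat -> R) :
  E_absllr qp qm (fun s => \sum_(k < N) a k * band t k s) = (\sum_(k < N) a k) / N.+1%:R.
Proof.
rewrite E_absllr_sum //; last by move=> k; exact: bdd_measurableZ.
rewrite mulr_suml; apply: eq_bigr => k _.
have kN := ltn_ord k; rewrite E_absllrZ // E_absllrB // !E_absllr_below ?(ltnW kN) //.
by rewrite -mulrBl -natrB // subSnn mul1r.
Qed.

Variables (g : R -> R) (M : R).
Hypothesis g_meas : measurable_fun setT g.
Hypothesis g_anti : forall x y, x <= y -> g y <= g x.
Hypothesis g_ge0 : forall s, 0 <= g s.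
Hypothesis g_le : forall s, 0 <= s -> g s <= M.

Lemma E_absllr_upper_step :
  E_absllr qp qm (upper_step N t g M) = (g (t 0) + \sum_(k < N) g (t k.+1)) / N.+1%:R.
Proof.
have step_bdd : bdd_measurable (fun s => \sum_(k < N) g (t k) * band t k s).
  exact: (bdd_measurable_band_step N t (g \o t)).
have head_bdd : bdd_measurable (fun s => M * below t 0 s) by exact: bdd_measurableZ.
have tail_bdd : bdd_measurable (fun s => 1 - below t N s) by exact: bdd_measurableB.
rewrite /upper_step !E_absllrD //; [|exact: bdd_measurableD|exact: bdd_measurableZ].
rewrite !E_absllrZ // E_absllrB // E_absllr_cst // !E_absllr_below //.
rewrite (E_absllr_band_step (g \o t)) mul0r mulr0 add0r.
have -> : 1 - N%:R / N.+1%:R = N.+1%:R^-1 :> R.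
  by rewrite -[X in X - _](@divff _ N.+1%:R) ?pnatr_eq0 // -mulrBl -natrB // subSnn mul1r.
rewrite -mulrDl; congr (_ / _).
by rewrite -(big_ord_recr N (g \o t)) big_ord_recl.
Qed.

Lemma E_absllr_quantile_sandwich :
  (\sum_(k < N) g (t k.+1)) / N.+1%:R <= E_absllr qp qm g <=
  (M + \sum_(k < N) g (t k.+1)) / N.+1%:R.
Proof.
have g_bdd : bdd_measurable g.
  by split => //; exists M => s s0; rewrite ger0_norm ?g_le.
apply/andP; split.
  rewrite -(E_absllr_band_step (g \o t \o S)).
  apply: E_absllr_le => //; first exact: bdd_measurable_band_step.
  by move=> s _; exact: lower_step_le quantile_mono _ g_anti g_ge0 s.
apply: (@le_trans _ _ (E_absllr qp qm (upper_step N t g M))).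
  apply: E_absllr_le => //; first exact: bdd_measurable_upper_step.
  by move=> s; exact: upper_step_ge quantile_mono _ _ g_anti g_le s.
by rewrite E_absllr_upper_step ler_wpM2r ?invr_ge0 // lerD2r g_le.
Qed.

End QuantileSandwich.

Lemma cvg_invn (R : realType) : (n%:R^-1 : R) @[n --> \oo] --> 0.
Proof.
apply/cvgrVy; first by near=> n; rewrite invr_gt0 ltr0n; near: n; exists 1%N.
rewrite (_ : unstable.inv_fun _ = (fun n : nat => (n%:R : R))); first exact: cvgr_idn.
by apply: funext => n /=; rewrite invrK.
Unshelve. all: end_near. Qed.

Lemma div_bounds (R : realFieldType) (n s L M : R) : 0 < n ->
  s / (n + 1) <= L <= (M + s) / (n + 1) ->
  L + n^-1 * (L - M) <= n^-1 * s <= L + n^-1 * L.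
Proof.
move=> n0; rewrite ler_pdivrMr ?ler_pdivlMr ?addr_gt0 // => /andP[lo up].
have nL : n^-1 * (L * (n + 1)) = L + n^-1 * L.
  by field; rewrite gt_eqF.
have : 0 < n^-1 by rewrite invr_gt0.
move: nL; move: n^-1 => y nL y0; apply/andP; split; nra.
Qed.

Lemma cvg_div_squeeze (R : realType) (S : nat -> R) (L M : R) :
  (forall N, S N / N.+1%:R <= L <= (M + S N) / N.+1%:R) ->
  (N%:R^-1 * S N) @[N --> \oo] --> L.
Proof.
move=> bounds.
have cvgL c : (L + N%:R^-1 * c) @[N --> \oo] --> L.
  rewrite -[X in _ --> X]addr0; apply: cvgD; first exact: cvg_cst.
  by rewrite -(mul0r c); apply: cvgMl; exact: cvg_invn.
apply: (squeeze_cvgr _ (cvgL (L - M)) (cvgL L)).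
near=> N; apply: div_bounds; first by rewrite ltr0n; near: N; exists 1%N.
by rewrite natr1; exact: bounds.
Unshelve. all: end_near. Qed.

Theorem lemma3 (R : realType) (qp qm : R -> R) (Psiinv : R -> R)
  (d : measure_display) (Omega : measurableType d) (P : probability Omega R)
  (Xs : nat -> Omega -> bool) (Ys : nat -> Omega -> R) (theta : R) :
  (* q^+ and q^- are probability densities *)
  is_pdf qp -> is_pdf qm ->
  (* (A1) *)
  (exists (M1 a : R) (S1 : {poly R}), 0 < M1 /\ 0 < a /\
     forall y, M1 < `|y| -> qp y < S1.[`|y|] * expR (- (a * `|y|)) /\
                            qm y < S1.[`|y|] * expR (- (a * `|y|))) ->
  (* (A2) *)
  (exists (M2 : R) (S2 : {poly R}), 0 < M2 /\
     forall y, M2 < `|y| -> `|llr qp qm y| < S2.[`|y|]) ->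
  (* (A3): T is a.s. finite, i.e. q^+ and q^- vanish simultaneously (a.e.) *)
  {ae @lebesgue_measure R, forall y, (qp y == 0) = (qm y == 0)} ->
  (* (A3): Psiinv is the inverse of the CDF Psi of |T| on [0,oo) *)
  (forall t, 0 <= t -> Psiinv (PsiCDF qp qm t) = t) ->
  (forall u, 0 <= u < 1 -> 0 <= Psiinv u /\ PsiCDF qp qm (Psiinv u) = u) ->
  (* (A3): smoothness, first three derivatives exist *)
  (forall (n : nat) (t : R), (n < 3)%N -> 0 < t ->
     derivable (derive1n n (PsiCDF qp qm)) t 1) ->
  (forall (n : nat) (u : R), (n < 3)%N -> 0 < u < 1 ->
     derivable (derive1n n Psiinv) u 1) ->
  (* random variables X_i(1), Y_i are measurable *)
  (forall i b, measurable [set w | Xs i w = b]) ->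
  (forall i, measurable_fun setT (Ys i)) ->
  (* (X_i(1), Y_i)_{i>=1} are i.i.d.: X_i uniform on {+-1}, Y_i | X_i has density q^{X_i} *)
  (forall (I : seq nat) (s : nat -> bool) (B : nat -> set R),
     uniq I -> (forall i, measurable (B i)) ->
     P (\bigcap_(i in [set` I]) [set w | Xs i w = s i /\ Ys i w \in B i])
     = (\prod_(i <- I)
          ((2%:R^-1)%:E * \int[lebesgue_measure]_(y in B i) (qof qp qm (s i) y)%:E))%E) ->
  theta < 0 ->
  {ae P, forall w,
     (fun N : nat => N%:R^-1 *
        ln (condMGF Psiinv theta (fun i : 'I_N => llr qp qm (Ys i.+1 w))))
     @ \oo -->
     (fine (\int[lebesgue_measure]_(y in setT)
              (ln (1 + expR (theta * `|llr qp qm y|)) * ((qp y + qm y) / 2))%:E)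
      - ln 2)}.
Proof.
move=> qp_pdf qm_pdf _ _ _ _ Psiinv_right _ _ _ _ _ theta_lt0.
apply: aeW => w.
pose g s := softplus (theta * s).
pose t N k := Psiinv (k%:R / N.+1%:R).
have t_spec N k : (k <= N)%N -> 0 <= t N k /\ PsiCDF qp qm (t N k) = k%:R / N.+1%:R.
  move=> kN; apply: Psiinv_right.
  by rewrite divr_ge0 //= ltr_pdivrMr ?ltr0Sn // mul1r ltr_nat.
have E_g : (N%:R^-1 * \sum_(k < N) g (t N k.+1)) @[N --> \oo] --> E_absllr qp qm g.
  apply: (@cvg_div_squeeze _ _ _ (ln 2)) => N.
  apply: E_absllr_quantile_sandwich => //.
  - by case: (t_spec N 0%N).
  - by move=> k /t_spec[].
  - by apply: measurableT_comp; [exact: measurable_softplus | exact: mulrl_measurable].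
  - by move=> x y xy; apply: ler_softplus; rewrite ler_wnM2l // ltW.
  - by move=> s; exact: softplus_ge0.
  - by move=> s s0; rewrite -softplus0 ler_softplus // mulr_le0_ge0 // ltW.
apply: cvg_trans (cvgB E_g (cvg_cst (ln 2))); apply: near_eq_cvg.
near=> N; rewrite /= ln_condMGF; last by near: N; exists 1%N.
by rewrite (sum_rank _ (fun k => g (Psiinv (k%:R / N.+1%:R)))).
Unshelve. all: end_near. Qed.
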